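(* (Fusion Theorem) For positive integers $\lambda,t,m,s,v$ with $2\le t\le ms$, $$OCAN_{\lambda}(t,m,s,v)\le OCAN_{\lambda}(t,m,s,v+1)-2.$$
   Context: For positive integers $m,s$, the RT poset $[m\times s]$ is the set $\{1,\ldots,ms\}$ partitioned into $m$ blocks $B_i=\{is+1,\ldots,(i+1)s\}$ ($i=0,\ldots,m-1$); each block is a chain under the usual order of the integers, and elements of different blocks are incomparable. An anti-ideal is the complement of an ideal (a down-closed set). Given an $N\times n$ array over an alphabet $V$ of size $v$, a set of $t$ columns is $\lambda$-covered if in the $N\times t$ subarray formed by those columns every $t$-tuple over $V$ appears as a row at least $\lambda$ times. For positive integers with $2\le t\le ms$, an ordered covering array $OCA_{\lambda}(N;t,m,s,v)$ is an $N\times ms$ array over an alphabet of size $v$ with columns labeled by the elements of $[m\times s]$ such that for every anti-ideal $J$ of size $t$ the set of columns labeled by $J$ is $\lambda$-covered; $OCAN_{\lambda}(t,m,s,v)$ is the smallest $N$ for which an $OCA_{\lambda}(N;t,m,s,v)$ exists. *)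

From mathcomp Require Import all_boot.
Set Implicit Arguments. Unset Strict Implicit. Unset Printing Implicit Defensive.

(* Columns of an OCA are labelled by the elements of the RT poset [m x s],
   represented 0-based as 'I_(m*s): element x lies in block x %/ s, and
   x <= y in the poset iff x, y lie in the same block and x <= y as integers. *)
Definition rt_le (m s : nat) (x y : 'I_(m * s)) : bool :=
  (x %/ s == y %/ s) && (x <= y).

(* An anti-ideal = complement of a down-closed set = an up-closed set. *)
Definition anti_ideal (m s : nat) (J : {set 'I_(m * s)}) : bool :=
  [forall x, forall y, ((x \in J) && rt_le x y) ==> (y \in J)].

(* Tuples over J
   are represented by full functions f; values of f outside J are irrelevant. *)
Definition lam_covered (lam N n v : nat) (A : {ffun 'I_N * 'I_n -> 'I_v})
    (J : {set 'I_n}) : bool :=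
  [forall f : {ffun 'I_n -> 'I_v},
     lam <= #|[set r : 'I_N | [forall j in J, A (r, j) == f j]]|].

Definition is_OCA (lam N t m s v : nat) (A : {ffun 'I_N * 'I_(m * s) -> 'I_v}) : bool :=
  [forall J : {set 'I_(m * s)}, (anti_ideal J && (#|J| == t)) ==> lam_covered lam A J].

Definition has_OCA (lam t m s v N : nat) : bool :=
  [exists A : {ffun 'I_N * 'I_(m * s) -> 'I_v}, is_OCA lam t A].

(* An OCA always exists: lam copies of all rows of V^(ms). *)
Lemma has_OCA_exists lam t m s v : exists N, has_OCA lam t m s v N.
Proof.
pose F := ({ffun 'I_(m * s) -> 'I_v} : finType).
pose P := (('I_lam * F)%type : finType).
exists #|{: P}|.
apply/existsP.
exists [ffun p : 'I_#|{: P}| * 'I_(m * s) => (enum_val (A := {: P}) p.1).2 p.2].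
apply/forallP => J; apply/implyP => _; apply/forallP => f.
apply: (@leq_trans #|[set r : 'I_#|{: P}| | (enum_val (A := {: P}) r).2 == f]|).
  have -> : [set r : 'I_#|{: P}| | (enum_val (A := {: P}) r).2 == f] =
            [set enum_rank ((i, f) : P) | i : 'I_lam].
    apply/setP => r; rewrite inE; apply/eqP/imsetP.
      move=> H; exists (enum_val (A := {: P}) r).1 => //.
      by rewrite -H -surjective_pairing enum_valK.
    by move=> [i _ ->]; rewrite enum_rankK.
  rewrite card_imset ?card_ord // => i j /enum_rank_inj [].
  done.
apply: subset_leq_card; apply/subsetP => r; rewrite !inE => /eqP H.
by apply/forallP => j; apply/implyP => _; rewrite ffunE H.
Qed.

Definition OCAN (lam t m s v : nat) : nat :=
  ex_minn (has_OCA_exists lam t m s v).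

From mathcomp Require Import all_boot.
Set Implicit Arguments. Unset Strict Implicit. Unset Printing Implicit Defensive.

(* Let a_j and b_j be the entries of the first two rows of an OCA over
   v + 2 symbols in column j.  Delete these two rows and, in column j, merge
   the symbol a_j into b_j, then renumber the remaining v + 1 symbols.  A tuple
   f over the new alphabet lifts to a tuple f' avoiding every a_j; each row
   covering f' still covers f after fusion, and the first row never covers f'.
   The second row may cover f'; it is then replaced by a row covering f' with
   the entry in one column j0 changed to a_j0: after merging that row covers f
   as well, and since t >= 2 it differs from f' in another column, so it is
   neither of the deleted rows. *)

Definition matching_rows N n v (A : {ffun 'I_N * 'I_n -> 'I_v})
    (J : {set 'I_n}) (f : {ffun 'I_n -> 'I_v}) : {set 'I_N} :=
  [set r | [forall j in J, A (r, j) == f j]].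

Section Covering.

Variables (lam N n v : nat) (A : {ffun 'I_N * 'I_n -> 'I_v}) (J : {set 'I_n}).

Lemma matching_rowsP (f : {ffun 'I_n -> 'I_v}) r :
  reflect (forall j, j \in J -> A (r, j) = f j) (r \in matching_rows A J f).
Proof.
rewrite inE; apply: (iffP forallP) => [H j jJ | H j].
  by apply/eqP; move/implyP: (H j); apply.
by apply/implyP => /H ->.
Qed.

Lemma lam_coveredP :
  reflect (forall f, lam <= #|matching_rows A J f|) (lam_covered lam A J).
Proof. exact: forallP. Qed.

Lemma lam_covered_row (f : {ffun 'I_n -> 'I_v}) :
  0 < lam -> lam_covered lam A J -> exists r, r \in matching_rows A J f.
Proof. by move=> lam0 /lam_coveredP/(_ f)/(leq_trans lam0)/card_gt0P. Qed.

End Covering.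

Lemma lam_covered_rows_gt1 lam N n v (A : {ffun 'I_N * 'I_n -> 'I_v.+2})
    (J : {set 'I_n}) :
  0 < lam -> J != set0 -> lam_covered lam A J -> 1 < N.
Proof.
move=> lam0 /set0Pn [j jJ] covA.
have [r0 /matching_rowsP/(_ j jJ) r0j] := lam_covered_row [ffun=> ord0] lam0 covA.
have [r1 /matching_rowsP/(_ j jJ) r1j] := lam_covered_row [ffun=> ord_max] lam0 covA.
rewrite -[N]card_ord; apply/card_gt1P; exists r0, r1; split => //.
by apply/eqP => r01; move: r0j; rewrite r01 r1j !ffunE => /(congr1 val).
Qed.

Lemma is_OCAP lam N t m s v (A : {ffun 'I_N * 'I_(m * s) -> 'I_v}) :
  reflect (forall J, anti_ideal J -> #|J| = t -> lam_covered lam A J)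
          (is_OCA lam t A).
Proof.
apply: (iffP forallP) => [H J aJ cJ | H J].
  by move/implyP: (H J); apply; rewrite aJ cJ eqxx.
by apply/implyP => /andP [aJ /eqP cJ]; apply: H.
Qed.

Lemma card_ge_ord n p : #|[set x : 'I_n | p <= x]| = n - p.
Proof.
rewrite -sum1_card.
have := big_geq_mkord (op := addn) p n xpredT (fun _ => 1).
rewrite sum_nat_const_nat muln1 => ->.
by apply: eq_bigl => i; rewrite inE.
Qed.

Lemma anti_ideal_of_card m s t : t <= m * s ->
  exists2 J : {set 'I_(m * s)}, anti_ideal J & #|J| = t.
Proof.
move=> tms; exists [set x : 'I_(m * s) | m * s - t <= x].
  apply/forallP => x; apply/forallP => y; apply/implyP.
  by rewrite !inE => /andP [tx /andP [_ /(leq_trans tx)]].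
by rewrite card_ge_ord subKn.
Qed.

Section Fusion.

Variables (N n v : nat) (A : {ffun 'I_N.+2 * 'I_n -> 'I_v.+2}).

Let first_row : 'I_N.+2 := ord0.
Let second_row : 'I_N.+2 := lift ord0 ord0.
Let kept_row (x : 'I_N) : 'I_N.+2 := lift ord0 (lift ord0 x).

(* If the first two rows agree in column j, [unlift] fails and the junk symbol
   [ord0] is returned; the coverage argument never needs this value. *)
Definition fuse_symbol (j : 'I_n) (x : 'I_v.+2) : 'I_v.+1 :=
  let a := A (first_row, j) in
  odflt ord0 (unlift a (if x == a then A (second_row, j) else x)).

Let fused : {ffun 'I_N.+2 * 'I_n -> 'I_v.+1} :=
  [ffun p => fuse_symbol p.2 (A p)].

Definition fuse : {ffun 'I_N * 'I_n -> 'I_v.+1} :=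
  [ffun p => fused (kept_row p.1, p.2)].

Definition lift_tuple (f : {ffun 'I_n -> 'I_v.+1}) : {ffun 'I_n -> 'I_v.+2} :=
  [ffun j => lift (A (first_row, j)) (f j)].

Lemma fuse_symbol_lift j y : fuse_symbol j (lift (A (first_row, j)) y) = y.
Proof. by rewrite /fuse_symbol eq_sym (negbTE (neq_lift _ _)) liftK. Qed.

Lemma fuse_symbol_merge j :
  fuse_symbol j (A (first_row, j)) = fuse_symbol j (A (second_row, j)).
Proof. by rewrite /fuse_symbol eqxx; case: eqP => [->|]. Qed.

Lemma card_kept_rows (C : {set 'I_N.+2}) :
  #|C :\: [set first_row; second_row]| <= #|[set x | kept_row x \in C]|.
Proof.
have kept_inj : injective kept_row by move=> x y /lift_inj /lift_inj.
rewrite -(card_imset _ kept_inj); apply/subset_leq_card/subsetP => r.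
rewrite !inE negb_or => /andP [/andP [r1 r2] rC].
case: (unliftP ord0 r) r1 r2 rC => [r'|] -> // _.
case: (unliftP ord0 r') => [x|] -> // _ xC.
by apply: imset_f; rewrite inE.
Qed.

Section Tuple.

Variables (J : {set 'I_n}) (f : {ffun 'I_n -> 'I_v.+1}).

Let S := matching_rows A J (lift_tuple f).
Let C := matching_rows fused J f.

Lemma matching_rows_fuse : matching_rows fuse J f = [set x | kept_row x \in C].
Proof. by apply/setP => x; rewrite !inE; apply: eq_forallb => j; rewrite !ffunE. Qed.

Lemma matching_rows_lift_tuple : S \subset C.
Proof.
apply/subsetP => r /matching_rowsP rf; apply/matching_rowsP => j jJ.
by rewrite ffunE rf // ffunE fuse_symbol_lift.
Qed.

Lemma first_row_notin_lift_tuple : J != set0 -> first_row \notin S.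
Proof.
case/set0Pn => j jJ; apply/matching_rowsP => /(_ j jJ).
by rewrite ffunE => /eqP; rewrite (negbTE (neq_lift _ _)).
Qed.

Lemma replacement_row lam j0 j1 :
    0 < lam -> j0 \in J -> j1 \in J -> j0 != j1 -> lam_covered lam A J ->
    second_row \in S ->
  exists2 r, r \notin S & r \in C :\: [set first_row; second_row].
Proof.
move=> lam0 j0J j1J j01 covA /matching_rowsP r2S.
pose g := [ffun j => if j == j0 then A (first_row, j0) else lift_tuple f j].
have [r /matching_rowsP rg] := lam_covered_row g lam0 covA.
have rS : r \notin S.
  apply/matching_rowsP => /(_ j0 j0J).
  by rewrite rg // !ffunE eqxx => /eqP; rewrite (negbTE (neq_lift _ _)).
exists r => //; rewrite in_setD in_set2 negb_or -andbA; apply/and3P; split.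
- apply/eqP => r1; move: (rg j1 j1J); rewrite r1 !ffunE eq_sym (negbTE j01).
  by move/eqP; rewrite (negbTE (neq_lift _ _)).
- by apply: contraNneq rS => ->; apply/matching_rowsP.
apply/matching_rowsP => j jJ; rewrite ffunE rg // ffunE.
case: eqVneq => [->|_]; last by rewrite ffunE fuse_symbol_lift.
by rewrite fuse_symbol_merge r2S // ffunE fuse_symbol_lift.
Qed.

End Tuple.

Lemma lam_covered_fuse lam (J : {set 'I_n}) :
  0 < lam -> 1 < #|J| -> lam_covered lam A J -> lam_covered lam fuse J.
Proof.
move=> lam0 J2 covA; apply/lam_coveredP => f.
have /card_gt1P [j0 [j1 [j0J j1J j01]]] := J2.
have J0 : J != set0 by rewrite -card_gt0 ltnW.
set S := matching_rows A J (lift_tuple f).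
have covS : lam <= #|S| by apply: (lam_coveredP _ _ _ covA).
have SC := matching_rows_lift_tuple J f.
have r1S := first_row_notin_lift_tuple f J0.
rewrite matching_rows_fuse; apply: leq_trans (card_kept_rows _).
have [r2S | r2S] := boolP (second_row \in S); last first.
  apply: leq_trans covS (subset_leq_card _); apply/subsetP => r rS.
  rewrite in_setD in_set2 (subsetP SC) // andbT negb_or.
  by apply/andP; split; [apply: contraNneq r1S | apply: contraNneq r2S] => <-.
have [r rS rC] := replacement_row lam0 j0J j1J j01 covA r2S.
apply: leq_trans covS _.
have -> : #|S| = #|r |: (S :\ second_row)|.
  by rewrite cardsU1 (cardsD1 second_row S) r2S in_setD1 (negbTE rS) andbF.
apply/subset_leq_card/subsetP => r'; rewrite in_setU1 in_setD1.
case/predU1P => [-> // | /andP [r'2 r'S]].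
rewrite in_setD in_set2 negb_or r'2 (subsetP SC) // !andbT.
by apply: contraNneq r1S => <-.
Qed.

End Fusion.

Lemma has_OCA_fuse lam t m s v N : 0 < lam -> 1 < t ->
  has_OCA lam t m s v.+2 N.+2 -> has_OCA lam t m s v.+1 N.
Proof.
move=> lam0 t2 /existsP [A /is_OCAP oA]; apply/existsP; exists (fuse A).
apply/is_OCAP => J aJ cJ; apply: lam_covered_fuse (oA J aJ cJ) => //.
by rewrite cJ.
Qed.

Lemma OCAN_spec lam t m s v : has_OCA lam t m s v (OCAN lam t m s v).
Proof. by rewrite /OCAN; case: ex_minnP. Qed.

Lemma OCAN_min lam t m s v N : has_OCA lam t m s v N -> OCAN lam t m s v <= N.
Proof. by rewrite /OCAN; case: ex_minnP => M _; apply. Qed.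

Lemma OCAN_gt1 lam t m s v : 0 < lam -> 0 < t <= m * s ->
  1 < OCAN lam t m s v.+2.
Proof.
move=> lam0 /andP [t0 tms]; have [J aJ cJ] := anti_ideal_of_card tms.
have /existsP [A /is_OCAP oA] := OCAN_spec lam t m s v.+2.
by apply: lam_covered_rows_gt1 lam0 _ (oA J aJ cJ); rewrite -card_gt0 cJ.
Qed.

Theorem theorem1 (lam t m s v : nat) :
  0 < lam -> 0 < t -> 0 < m -> 0 < s -> 0 < v ->
  2 <= t <= m * s ->
  OCAN lam t m s v + 2 <= OCAN lam t m s v.+1.
Proof.
move=> lam0 t0 _ _ v0 /andP [t2 tms]; case: v v0 => // v _.
have N2 : 1 < OCAN lam t m s v.+2 by apply: OCAN_gt1; rewrite ?t0.
move: N2 (OCAN_spec lam t m s v.+2).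
case: (OCAN lam t m s v.+2) => [|[|N]] // _ oA.
by rewrite addn2; apply: OCAN_min; apply: has_OCA_fuse oA.
Qed.
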